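(* Let $H$ be a component of $G[\overline{C}]$ and let $v\in N_H(x_1)$. Then $H$ contains exactly one path $P$ such that $P$ is a $v,w$-path for some $w\in N_H(x_2)$. The same statement holds with the roles of $x_1$ and $x_2$ interchanged.
   Context: All graphs are simple. $\mathcal{G}^*$ denotes the class of graphs in which any two distinct odd cycles share at most one edge. Standing setting: $G\in\mathcal{G}^*$ is $2$-connected, and $C$ is a longest odd cycle of $G$ with $|C|\ge 5$. We also write $C$ for its vertex set. Let $\overline{C}=V(G)\setminus C$, assumed nonempty. For $v\in\overline{C}$ and $w\in C$, $v$ touches $w$ if there is a $v,w$-path meeting $C$ only at $w$. $T(v)=\{w\in C: v \text{ touches } w\}$. In this setting, $T(v)$ is the same set for all $v\in\overline{C}$; this set is $\{x_1,x_2\}$ for two adjacent vertices $x_1,x_2$ of $C$. For $u\in V(G)$, write $N_H(u)=N(u)\cap V(H)$. *)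

From mathcomp Require Import all_boot.
Set Implicit Arguments. Unset Strict Implicit. Unset Printing Implicit Defensive.

Section Graph.
Variables (T : finType) (e : rel T).

Definition simple_graph : Prop := symmetric e /\ irreflexive e.

Definition is_cycle (c : seq T) : bool := [&& uniq c, 2 < size c & cycle e c].
Definition odd_cycle (c : seq T) : bool := is_cycle c && odd (size c).

Definition cedge (c : seq T) (x y : T) : bool :=
  ((x \in c) && (next c x == y)) || ((y \in c) && (next c y == x)).

(* two cycles are distinct (as subgraphs) iff their edge sets differ *)
Definition distinct_cycles (c1 c2 : seq T) : Prop :=
  exists x y, cedge c1 x y != cedge c2 x y.

Definition share_at_most_one_edge (c1 c2 : seq T) : Prop :=
  forall x y x' y', cedge c1 x y -> cedge c2 x y ->
    cedge c1 x' y' -> cedge c2 x' y' -> [set x; y] = [set x'; y'].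

Definition in_Gstar : Prop :=
  forall c1 c2, odd_cycle c1 -> odd_cycle c2 -> distinct_cycles c1 c2 ->
    share_at_most_one_edge c1 c2.

Definition path_in (S : {set T}) (x : T) (p : seq T) : bool :=
  [&& uniq (x :: p), path e x p & all (fun z => z \in S) (x :: p)].

Definition connected_in (S : {set T}) : Prop :=
  forall x y, x \in S -> y \in S -> exists p, path_in S x p /\ last x p = y.

Definition two_connected : Prop :=
  2 < #|T| /\ connected_in [set: T] /\ forall z : T, connected_in [set~ z].

Definition longest_odd_cycle (C : seq T) : Prop :=
  odd_cycle C /\ forall D, odd_cycle D -> size D <= size C.

(* v touches w: there is a v,w-path meeting C only at w *)
Definition touches (C : seq T) (v w : T) : Prop :=
  w \in C /\ exists p, [/\ uniq (v :: p), path e v p, last v p = w &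
                          all (fun z => z \notin C) (belast v p)].

Definition Cbar (C : seq T) : {set T} := [set v | v \notin C].

Definition component_of (S H : {set T}) : Prop :=
  [/\ H \subset S, H != set0, connected_in H &
      forall x y, x \in H -> y \in S -> e x y -> y \in H].

Definition NH (H : {set T}) (u : T) : {set T} := [set y in H | e u y].

End Graph.

(* Let ab be an edge of C and v a neighbour of a in H.  Every v,b-path P
   through H closes to the cycle a v P b a, which is odd: otherwise replacing
   the edge ab of C by the path a v P b would give an odd cycle longer than C.
   Since v touches b such a path exists, and two different ones would give
   two distinct odd cycles sharing both edges av and ab, which G^* forbids. *)

From mathcomp Require Import all_boot.
Set Implicit Arguments. Unset Strict Implicit. Unset Printing Implicit Defensive.

Section CycleSeq.
Variable T : finType.
Implicit Types (s r : seq T) (x y : T).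

Lemma next_cat_mid s r x y : uniq (s ++ [:: x, y & r]) -> next (s ++ [:: x, y & r]) x = y.
Proof. by move=> Uc; rewrite -(next_rot (size s) Uc) rot_size_cat /= eqxx. Qed.

Lemma prev_cat_mid s r x y : uniq (s ++ [:: x, y & r]) -> prev (s ++ [:: x, y & r]) y = x.
Proof. by move=> Uc; have := prev_next Uc x; rewrite next_cat_mid. Qed.

Lemma prev_head x s : uniq (x :: s) -> prev (x :: s) x = last x s.
Proof.
case/andP=> xs _; rewrite prev_nth mem_head memNindex //.
by rewrite -[size s]/((size (x :: s)).-1) nth_last.
Qed.

Lemma cedge_next_prev (c : seq T) x y : uniq c -> x \in c ->
  cedge c x y = (y == next c x) || (y == prev c x).
Proof.
move=> Uc xc; rewrite /cedge xc eq_sym /=; congr orb.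
apply/andP/eqP => [[_ /eqP <-] | ->]; first by rewrite prev_next.
by rewrite mem_prev next_prev.
Qed.

Lemma rot_to_next (c : seq T) x : uniq c -> x \in c -> 1 < size c ->
  exists i r, rot i c = [:: x, next c x & r].
Proof.
move=> Uc xc; case: (rot_to xc) => i [|y r] Ec; first by rewrite -(size_rot i) Ec.
by exists i, r; rewrite Ec -(next_rot i Uc) Ec /= eqxx.
Qed.

Lemma distinct_cycles_fork s w u y1 y2 r1 r2 :
  uniq (s ++ [:: w, u, y1 & r1]) -> uniq (s ++ [:: w, u, y2 & r2]) -> y1 != y2 ->
  distinct_cycles (s ++ [:: w, u, y1 & r1]) (s ++ [:: w, u, y2 & r2]).
Proof.
have Ecat r : s ++ [:: w, u & r] = rcons s w ++ u :: r by rewrite cat_rcons.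
have uc r : u \in s ++ [:: w, u & r] by rewrite mem_cat !inE eqxx !orbT.
move=> U1 U2 y12; exists u, y1.
rewrite !cedge_next_prev ?uc // prev_cat_mid // !Ecat !next_cat_mid -?Ecat //.
have y1w : y1 != w.
  by apply: contraTneq U1 => ->; rewrite cat_uniq /= !inE eqxx !orbT !andbF.
by rewrite eqxx (negbTE y12) prev_cat_mid // (negbTE y1w).
Qed.

Lemma rcons_fork (p1 p2 : seq T) z : z \notin p1 -> z \notin p2 -> p1 != p2 ->
  exists s y1 r1 y2 r2,
    [/\ rcons p1 z = s ++ y1 :: r1, rcons p2 z = s ++ y2 :: r2 & y1 != y2].
Proof.
elim: p1 p2 => [|x1 p1 IH] [|x2 p2] //=.
- by rewrite inE negb_or => _ /andP[zx2 _] _; exists [::], z, [::], x2, (rcons p2 z).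
- rewrite inE negb_or eq_sym => /andP[x1z _] _ _.
  by exists [::], x1, (rcons p1 z), z, [::].
rewrite !inE !negb_or => /andP[_ zp1] /andP[_ zp2].
case: (eqVneq x1 x2) => [<- | x12] p12; last first.
  by exists [::], x1, (rcons p1 z), x2, (rcons p2 z).
have [|s [y1 [r1 [y2 [r2 [E1 E2 y12]]]]]] := IH p2 zp1 zp2.
  by apply: contra p12 => /eqP ->.
by exists (x1 :: s), y1, r1, y2, r2; rewrite E1 E2.
Qed.

Lemma detour_distinct a v b (p1 p2 : seq T) :
  uniq [:: a, v & rcons p1 b] -> uniq [:: a, v & rcons p2 b] -> p1 != p2 ->
  distinct_cycles [:: a, v & rcons p1 b] [:: a, v & rcons p2 b].
Proof.
have bp p : uniq [:: a, v & rcons p b] -> b \notin p.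
  by rewrite /= rcons_uniq => /and3P[_ _ /andP[]].
move=> U1 U2 p12.
have [s [y1 [r1 [y2 [r2 [E1 E2 y12]]]]]] := rcons_fork (bp _ U1) (bp _ U2) p12.
have Es r : [:: a, v & s ++ r] =
    belast a (belast v s) ++ [:: last a (belast v s), last v s & r].
  by rewrite -[RHS]cat_rcons -cat_rcons -lastI rcons_cons -lastI.
by move: U1 U2; rewrite E1 E2 !Es => U1 U2; apply: distinct_cycles_fork U1 U2 y12.
Qed.

End CycleSeq.

Lemma detours_eq (T : finType) (e : rel T) a v b (p1 p2 : seq T) : in_Gstar e ->
  odd_cycle e [:: a, v & rcons p1 b] -> odd_cycle e [:: a, v & rcons p2 b] -> p1 = p2.
Proof.
move=> Gstar O1 O2; apply/eqP/negP => /negP p12.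
have [U1 U2] : uniq [:: a, v & rcons p1 b] /\ uniq [:: a, v & rcons p2 b].
  by case/andP: O1 => /and3P[? _ _] _; case/andP: O2 => /and3P[? _ _] _.
have edges p : uniq [:: a, v & rcons p b] ->
    cedge [:: a, v & rcons p b] a v /\ cedge [:: a, v & rcons p b] a b.
  move=> U; rewrite !cedge_next_prev ?mem_head // prev_head //=.
  by rewrite !eqxx last_rcons eqxx orbT.
have [av1 ab1] := edges _ U1; have [av2 ab2] := edges _ U2.
have [av vb] : a != v /\ v != b.
  by move: U1; rewrite /= !mem_rcons !inE => /andP[/norP[? _] /andP[/norP[? _] _]].
have shared := Gstar _ _ O1 O2 (detour_distinct U1 U2 p12) _ _ _ _ av1 av2 ab1 ab2.
have : v \in [set a; b] by rewrite -shared set22.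
by rewrite !inE eq_sym (negbTE av) (negbTE vb).
Qed.

Section OddDetour.
Variables (T : finType) (e : rel T).
Hypotheses (sym_e : symmetric e) (irr_e : irreflexive e).

Lemma longest_odd_cycle_rev C : longest_odd_cycle e C -> longest_odd_cycle e (rev C).
Proof.
case=> /andP[/and3P[UC szC cycC] oC] maxC; split; last first.
  by move=> D /maxC; rewrite size_rev.
rewrite /odd_cycle /is_cycle rev_uniq size_rev UC szC oC rev_cycle.
by rewrite (@eq_cycle _ _ e) ?cycC // => x y; apply: sym_e.
Qed.

Section LongestOddCycle.
Variables (C : seq T) (H : {set T}).
Hypotheses (maxC : longest_odd_cycle e C) (H_C : {in H, forall x, x \notin C}).

Lemma detour_even a v p : a \in C -> e a v -> path_in e H v p ->
  e (last v p) (next C a) -> ~~ odd (size p).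
Proof.
move: maxC => [/andP[/and3P[UC szC cycC] oC] maxC'] aC eav /and3P[Up pp /allP pH] eb.
have [i [q Eq]] := rot_to_next UC aC (ltnW szC).
set b := next C a in eb Eq.
have cycq : cycle e [:: a, b & q] by rewrite -Eq rot_cycle.
have Uq : uniq [:: a, b & q] by rewrite -Eq rot_uniq.
have szq : size C = (size q).+2 by rewrite -(size_rot i) Eq.
apply/negP => op.
suff /maxC' : odd_cycle e [:: a, v & p ++ b :: q].
  by rewrite /= size_cat /= szq addnS !ltnS ltnNge leq_addl.
have out_vp x : x \in [:: a, b & q] -> x \notin v :: p.
  by rewrite -Eq mem_rot => xC; apply: contraL xC => /pH /H_C.
rewrite /odd_cycle /is_cycle -[[:: a, v & p ++ b :: q]]/([:: a] ++ (v :: p) ++ (b :: q)).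
rewrite (perm_uniq (permEl (perm_catCA _ _ _))) cat_uniq Up Uq andbT !cat1s.
rewrite (introT hasPn out_vp) /=.
have oq : odd (size q) by move: oC; rewrite szq /= negbK.
rewrite size_cat /= addnS oddS oddD op oq rcons_cat cat_path eav pp /= eb.
by case/andP: cycq => _ pq; rewrite andbT.
Qed.

Lemma detour_odd_cycle_next a v p : a \in C -> e a v -> path_in e H v p ->
  e (last v p) (next C a) -> odd_cycle e [:: a, v & rcons p (next C a)].
Proof.
move=> aC eav Pp eb; have even_p := detour_even aC eav Pp eb.
case: maxC => /andP[/and3P[UC _ cycC] _] _; case/and3P: Pp => Up pp /allP pH.
set b := next C a in eb *.
have eab : e a b := next_cycle cycC aC.
have out_vp x : x \in C -> x \notin v :: p by apply: contraL => /pH /H_C.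
have ab : a != b by apply: contraTneq eab => <-; rewrite irr_e.
rewrite /odd_cycle /is_cycle -rcons_cons cons_uniq rcons_uniq mem_rcons inE negb_or.
rewrite ab !out_vp ?mem_next // Up /= size_rcons !oddS negbK even_p andbT.
by rewrite eav !rcons_path last_rcons pp eb sym_e eab.
Qed.

End LongestOddCycle.

Lemma detour_odd_cycle (C : seq T) (H : {set T}) a b v p :
  longest_odd_cycle e C -> {in H, forall x, x \notin C} -> cedge C a b ->
  e a v -> path_in e H v p -> e (last v p) b -> odd_cycle e [:: a, v & rcons p b].
Proof.
move=> maxC H_C; case/orP=> /andP[xC /eqP nx].
  by rewrite -nx; apply: detour_odd_cycle_next.
have UC : uniq C by case: maxC => /andP[/and3P[]].
have <- : next (rev C) a = b by rewrite next_rev // -nx prev_next.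
apply: detour_odd_cycle_next => //; first exact: longest_odd_cycle_rev.
  by move=> x /H_C; rewrite mem_rev.
by rewrite mem_rev -nx mem_next.
Qed.

Lemma component_path_closed (S H : {set T}) x p :
  component_of e S H -> x \in H -> path e x p ->
  all (fun z => z \in S) p -> all (fun z => z \in H) p.
Proof.
case=> _ _ _ closedH; elim: p x => //= y p IH x xH /andP[exy pp] /andP[yS pS].
have yH : y \in H := closedH x y xH yS exy.
by rewrite yH (IH y).
Qed.

Lemma touches_path_in (C : seq T) (H : {set T}) v b :
  component_of e (Cbar C) H -> v \in H -> touches e C v b ->
  exists p, path_in e H v p /\ e (last v p) b.
Proof.
move=> compH vH [bC [q [Uq pq lq qC]]].
have vC : v \notin C by case: compH => /subsetP/(_ v vH); rewrite inE.
case/lastP: q Uq pq lq qC => [|p z] Uq pq lq qC.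
  by move: lq bC => /= <-; rewrite (negbTE vC).
rewrite last_rcons in lq; subst z; rewrite belast_rcons in qC.
move: pq Uq; rewrite rcons_path -rcons_cons rcons_uniq => /andP[pp eb] /andP[_ Up].
exists p; split => //; rewrite /path_in Up pp /= vH.
apply: component_path_closed compH vH pp _.
by case/andP: qC => _; apply: sub_all => z; rewrite inE.
Qed.

Lemma unique_detour_path (C : seq T) (H : {set T}) a b : in_Gstar e ->
  longest_odd_cycle e C -> component_of e (Cbar C) H -> cedge C a b ->
  {in H, forall v, touches e C v b} ->
  forall v, v \in NH e H a -> exists! p, path_in e H v p /\ last v p \in NH e H b.
Proof.
move=> Gstar maxC compH ab touch v; rewrite inE => /andP[vH eav].
have H_C : {in H, forall x, x \notin C}.
  by case: compH => /subsetP sub _ _ _ x /sub; rewrite inE.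
have last_in p : path_in e H v p -> last v p \in H.
  by case/and3P=> _ _ /allP; apply; apply: mem_last.
have [p [Pp eb]] := touches_path_in compH vH (touch v vH).
exists p; split; first by rewrite inE last_in // sym_e.
move=> q [Pq]; rewrite inE => /andP[_ eb'].
by apply: (detours_eq Gstar); apply: (detour_odd_cycle maxC H_C ab eav); rewrite // sym_e.
Qed.

End OddDetour.

Theorem mainTheorem8 (T : finType) (e : rel T) (C : seq T) (x1 x2 : T) :
  simple_graph e -> in_Gstar e -> two_connected e ->
  longest_odd_cycle e C -> 5 <= size C ->
  (exists v, v \in Cbar C) ->
  x1 != x2 -> cedge C x1 x2 ->
  (forall v w, v \in Cbar C -> (touches e C v w <-> w \in [set x1; x2])) ->
  forall H : {set T}, component_of e (Cbar C) H ->
    (forall v, v \in NH e H x1 ->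
       exists! p : seq T, path_in e H v p /\ last v p \in NH e H x2) /\
    (forall v, v \in NH e H x2 ->
       exists! p : seq T, path_in e H v p /\ last v p \in NH e H x1).
Proof.
move=> [sym_e irr_e] Gstar _ maxC _ _ _ edge12 touchC H compH.
have touch x : x \in [set x1; x2] -> {in H, forall v, touches e C v x}.
  by case: (compH) => /subsetP sub _ _ _ xx v /sub vC; apply/touchC.
split; apply: (unique_detour_path sym_e irr_e Gstar maxC compH).
- exact: edge12.
- exact/touch/set22.
- by rewrite /cedge orbC.
- exact/touch/set21.
Qed.
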